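(* There is an absolute constant $c>0$ such that the following holds. Let $F:\mathbb{R}\to\mathbb{R}$ be a strictly convex function, and let $A,B,C$ be finite sets of real numbers with $|A|=|B|=|C|=k$. Then \[ \max\{|A+B|,\ |F(A)+C|\}\ge c\,k^{5/4}. \] In particular, $|A+F(A)|\ge c\,k^{5/4}$ for every finite $A\subset\mathbb{R}$ with $|A|=k$.
   Context: $F(A)=\{F(a):a\in A\}$; for finite $X,Y\subset\mathbb{R}$, $X+Y=\{x+y:x\in X,y\in Y\}$. *)

From Stdlib Require Import Reals List.
Import ListNotations.
Open Scope R_scope.

Definition strictly_convex (F : R -> R) : Prop :=
  forall x y t : R, x <> y -> 0 < t < 1 ->
    F (t * x + (1 - t) * y) < t * F x + (1 - t) * F y.

(* Finite sets of reals are represented by duplicate-free lists. *)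
Definition card (l : list R) : nat := length (nodup Req_EM_T l).

Definition sums (X Y : list R) : list R :=
  flat_map (fun x => map (fun y => x + y) Y) X.

Definition sumset_card (X Y : list R) : nat := card (sums X Y).

From Pilot Require Import Defs.
From Stdlib Require Import Reals List Lra.
From mathcomp Require Import all_boot Rstruct zify.
Set Implicit Arguments. Unset Strict Implicit.

(* Let a minimise F on A and let s be the larger half of A on one side of a,
   listed moving away from a, so that F is nondecreasing along s.  Strict
   convexity makes the steps (s_(i+1) - s_i, F s_(i+1) - F s_i) pairwise
   distinct.  For b in B and c in C the points (s_i + b, F s_i + c) form
   |B||C| chains of |s| - 1 steps in the grid (A + B) x (F(A) + C), monotone in
   both coordinates once points are replaced by their ranks.  A step whose rank
   increments are at most m and m' is determined by its start and increments,
   while by telescoping each chain has at most |A + B|/m (resp. |F(A) + C|/m')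
   longer steps.  Choosing m ~ |A + B|/|s| and m' ~ |F(A) + C|/|s| gives
   |B||C||s|^3 << (|A + B||F(A) + C|)^2,
   i.e. k^5 << max^4.  For |A + F(A)| take B = F(A) and C = A. *)

Open Scope R_scope.

Lemma strictly_convex_increment F x z h : strictly_convex F -> x < z -> 0 < h ->
  F (x + h) - F x < F (z + h) - F z.
Proof.
move=> convF xz h0.
have len_pos : 0 < z + h - x by lra.
set t := h / (z + h - x).
have t0 : 0 < t by apply: Rdiv_lt_0_compat.
have t1 : t < 1.
  by apply: (Rmult_lt_reg_r (z + h - x)) => //; rewrite /t Rmult_1_l; field_simplify; lra.
have := convF x (z + h) t ltac:(lra) ltac:(lra).
have := convF x (z + h) (1 - t) ltac:(lra) ltac:(lra).
have -> : t * x + (1 - t) * (z + h) = z by rewrite /t; field; lra.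
have -> : (1 - t) * x + (1 - (1 - t)) * (z + h) = x + h by rewrite /t; field; lra.
lra.
Qed.

Lemma strictly_convex_increment_inj F x z h : strictly_convex F -> h <> 0 ->
  F (x + h) - F x = F (z + h) - F z -> x = z.
Proof.
move=> convF h0 e.
wlog lt_xz : x z e / x < z.
  move=> wlog_xz; case: (Rtotal_order x z) => [|[//|]]; first exact: wlog_xz.
  by move=> lt_zx; symmetry; apply: wlog_xz.
case: (Rdichotomy _ _ h0) => [hneg|hpos]; last first.
  by have := strictly_convex_increment convF lt_xz hpos; lra.
have := @strictly_convex_increment F (x + h) (z + h) (- h) convF ltac:(lra) ltac:(lra).
rewrite !Rplus_assoc !Rplus_opp_r !Rplus_0_r; lra.
Qed.

Lemma strictly_convex_between F a x y : strictly_convex F ->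
  a < x < y \/ y < x < a -> F a <= F y -> F x < F y.
Proof.
move=> convF axy Fay.
have ay : a <> y by lra.
set t := (y - x) / (y - a).
have tE : t * (y - a) = y - x by rewrite /t; field; lra.
have t01 : 0 < t < 1 by case: axy => ?; split; nra.
have := convF a y t ay t01.
have -> : t * a + (1 - t) * y = x by lra.
nra.
Qed.

Open Scope nat_scope.

Section StrictTotalOrder.
Variables (T : eqType) (lt : rel T).
Hypotheses (lt_irr : irreflexive lt) (lt_trans : transitive lt)
  (lt_total : forall x y, x != y -> lt x y || lt y x).

Definition rank (D : seq T) (u : T) : nat := count (lt^~ u) D.

Lemma rank_le D u v : lt u v -> rank D u <= rank D v.
Proof. by move=> uv; apply: sub_count => d /= du; exact: lt_trans du uv. Qed.

Lemma rank_ltn D u v : u \in D -> lt u v -> rank D u < rank D v.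
Proof.
move=> + uv; elim: D => //= d D IH; rewrite inE => /predU1P [<-|uD].
  by rewrite lt_irr uv add0n add1n ltnS rank_le.
have := IH uD; case: (boolP (lt d u)) => [du|_]; last by case: (lt d v); lia.
by rewrite (lt_trans du uv).
Qed.

Lemma rank_lt_size D u : u \in D -> rank D u < size D.
Proof.
move=> uD; rewrite /rank -(count_predC (lt^~ u)) -{1}[count _ _]addn0 ltn_add2l -has_count.
by apply/hasP; exists u; rewrite //= lt_irr.
Qed.

Lemma rank_inj D : {in D &, injective (rank D)}.
Proof.
move=> u v uD vD e; apply/eqP/negPn/negP => /lt_total/orP[uv|vu].
- by have := rank_ltn uD uv; rewrite e ltnn.
- by have := rank_ltn vD vu; rewrite e ltnn.
Qed.

Lemma sorted_sort_strict s : uniq s -> sorted lt (sort [rel x y | (x == y) || lt x y] s).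
Proof.
set le := [rel x y | _].
have le_total : total le.
  by move=> x y /=; case: (eqVneq x y) => [->|/lt_total]; rewrite ?eqxx.
have le_trans : transitive le.
  move=> y x z /predU1P[->//|xy] /predU1P[<-|yz] /=; first by rewrite xy orbT.
  by rewrite (lt_trans xy yz) orbT.
move=> us; rewrite sorted_pairwise //.
have : pairwise [rel x y | le x y && (x != y)] (sort le s).
  by rewrite pairwise_relI -sorted_pairwise ?sort_sorted // -uniq_pairwise sort_uniq.
by apply: sub_pairwise => x y /andP[/predU1P[->|//]]; rewrite eqxx.
Qed.
End StrictTotalOrder.

Lemma balance_thresholds c K n N : 0 < K -> K <= n -> K <= N ->
  (forall m m', c * K <= n.+1 * m.+1 * N.+1 * m'.+1 + c * (n %/ m.+1 + N %/ m'.+1)) ->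
  c * K ^ 3 <= 200 * (n * N) ^ 2.
Proof.
move=> K0 Kn KN count_bound.
have threshold x : K <= x ->
    4 * (x %/ (4 * x %/ K).+1) < K /\ (4 * x %/ K).+1 * K <= 5 * x.
  move=> Kx; set m := 4 * x %/ K.
  have up : 4 * x < m.+1 * K := ltn_ceil (4 * x) K0.
  have down : m * K <= 4 * x := leq_divM (4 * x) K.
  have q_le : x %/ m.+1 * m.+1 <= x := leq_divM x m.+1.
  split; last by lia.
  by rewrite -(ltn_pmul2r (ltn0Sn m)) -mulnA mulnC; lia.
(* With m = 4n/K and m' = 4N/K fewer than K/4 steps of a chain have a large
   increment of either kind, so at least half of all steps are short. *)
have [smallX m_le] := threshold n Kn; have [smallY m'_le] := threshold N KN.
have := count_bound (4 * n %/ K) (4 * N %/ K).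
set m := 4 * n %/ K in m_le smallX *; set m' := 4 * N %/ K in m'_le smallY *.
set a := n %/ _ in smallX *; set b := N %/ _ in smallY * => cK.
have cK2 : c * K <= 2 * (n.+1 * m.+1 * N.+1 * m'.+1).
  have : 2 * (c * (a + b)) <= c * K by rewrite mulnCA leq_mul2l; apply/orP; right; lia.
  lia.
have nN : n.+1 * N.+1 <= (2 * n) * (2 * N) by apply: leq_mul; lia.
have mK : (m.+1 * K) * (m'.+1 * K) <= (5 * n) * (5 * N) by apply: leq_mul.
have := leq_mul cK2 (leqnn (K * K)).
have := leq_mul nN mK.
rewrite expnMn; lia.
Qed.

Lemma five_fourths_power_bound k K c n N M :
  k <= 4 * K -> K * k <= c -> c * K ^ 3 <= 200 * (n * N) ^ 2 -> n <= M -> N <= M ->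
  k ^ 5 <= (16 * M) ^ 4.
Proof.
move=> kK Kkc chain nM NM.
have k4 : k ^ 4 <= (4 * K) ^ 4 by rewrite leq_exp2r.
have nN2 : (n * N) ^ 2 <= (M * M) ^ 2 by rewrite leq_exp2r // leq_mul.
have cK : K * k * K ^ 3 <= c * K ^ 3 by rewrite leq_mul2r Kkc orbT.
apply: (@leq_trans (k * (4 * K) ^ 4)); first by rewrite expnS leq_mul2l k4 orbT.
lia.
Qed.

Lemma count_large_increments (f : nat -> nat) K m :
  (forall i, i < K -> f i <= f i.+1) ->
  (\sum_(i < K) (m < f i.+1 - f i)) * m.+1 <= f K - f 0.
Proof.
move=> f_mono; rewrite big_distrl /=.
rewrite -(telescope_sumn_in (leq0n K)) => [|i /andP[_]]; last exact: f_mono.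
rewrite big_mkord; apply: leq_sum => i _.
by case: ltnP => //= large; rewrite mul1n.
Qed.

Lemma card_large_increments (P : finType) K n m (Z : P -> nat -> nat) :
  (forall p, Z p K <= n) -> (forall p i, i < K -> Z p i <= Z p i.+1) ->
  #|[set t : P * 'I_K | m < Z t.1 t.2.+1 - Z t.1 t.2]| <= #|P| * (n %/ m.+1).
Proof.
move=> Z_le Z_mono.
have -> : #|[set t : P * 'I_K | m < Z t.1 t.2.+1 - Z t.1 t.2]| =
    \sum_p \sum_(i < K) (m < Z p i.+1 - Z p i).
  rewrite -sum1_card big_mkcond /= pair_bigA /=.
  by apply: eq_bigr => t _; rewrite inE; case: ltnP.
rewrite -sum_nat_const; apply: leq_sum => p _; rewrite leq_divRL //.
apply: leq_trans (count_large_increments m (Z_mono p)) _.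
exact: leq_trans (leq_subr _ _) (Z_le p).
Qed.

Section StepCount.
Variables (P : finType) (K n N : nat) (X Y : P -> nat -> nat).
Hypotheses (X_le : forall p i, i <= K -> X p i <= n)
  (Y_le : forall p i, i <= K -> Y p i <= N)
  (X_mono : forall p i, i < K -> X p i <= X p i.+1)
  (Y_mono : forall p i, i < K -> Y p i <= Y p i.+1)
  (step_inj : forall p q (i j : 'I_K), X p i = X q j -> X p i.+1 = X q j.+1 ->
     Y p i = Y q j -> Y p i.+1 = Y q j.+1 -> (p, i) = (q, j)).

Let dX (t : P * 'I_K) := X t.1 t.2.+1 - X t.1 t.2.
Let dY (t : P * 'I_K) := Y t.1 t.2.+1 - Y t.1 t.2.

Lemma card_short_steps m m' :
  #|[set t : P * 'I_K | (dX t <= m) && (dY t <= m')]| <= n.+1 * m.+1 * N.+1 * m'.+1.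
Proof.
pose code (t : P * 'I_K) : 'I_n.+1 * 'I_m.+1 * 'I_N.+1 * 'I_m'.+1 :=
  (inord (X t.1 t.2), inord (dX t), inord (Y t.1 t.2), inord (dY t)).
suff code_inj : {in [set t : P * 'I_K | (dX t <= m) && (dY t <= m')] &, injective code}.
  by rewrite -(card_in_imset code_inj) (leq_trans (max_card _)) // !card_prod !card_ord.
move=> [p i] [q j]; rewrite !inE /code /dX /dY /= => /andP[dXi dYi] /andP[dXj dYj] [].
have Xi := X_le p (ltnW (ltn_ord i)); have Xj := X_le q (ltnW (ltn_ord j)).
have Yi := Y_le p (ltnW (ltn_ord i)); have Yj := Y_le q (ltnW (ltn_ord j)).
have Xi' := X_mono p (ltn_ord i); have Xj' := X_mono q (ltn_ord j).
have Yi' := Y_mono p (ltn_ord i); have Yj' := Y_mono q (ltn_ord j).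
have inord_inj b x y : x <= b -> y <= b -> @inord b x = inord y -> x = y.
  by move=> xb yb /(congr1 val) /=; rewrite !inordK ?ltnS.
move=> /(inord_inj _ _ _ Xi Xj) eX0 /(inord_inj _ _ _ dXi dXj) eX1.
move=> /(inord_inj _ _ _ Yi Yj) eY0 /(inord_inj _ _ _ dYi dYj) eY1.
by apply: step_inj => //; lia.
Qed.

Lemma card_steps m m' :
  #|P| * K <= n.+1 * m.+1 * N.+1 * m'.+1 + #|P| * (n %/ m.+1 + N %/ m'.+1).
Proof.
rewrite -{1}[K]card_ord -card_prod.
rewrite -(cardsC [set t : P * 'I_K | (dX t <= m) && (dY t <= m')]) mulnDr.
apply: leq_add; first exact: card_short_steps.
apply: leq_trans _ (leq_add (card_large_increments m (fun p => X_le p (leqnn K)) X_mono)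
                          (card_large_increments m' (fun p => Y_le p (leqnn K)) Y_mono)).
apply: leq_trans _ (leq_card_setU _ _); apply: subset_leq_card.
by apply/subsetP => t; rewrite !inE negb_and -!ltnNge.
Qed.

Theorem step_count_bound : 0 < K -> K <= n -> K <= N -> #|P| * K ^ 3 <= 200 * (n * N) ^ 2.
Proof. by move=> K0 Kn KN; apply: balance_thresholds => // m m'; exact: card_steps. Qed.

End StepCount.

Open Scope R_scope.

Definition lt_dir (up : bool) : rel R := if up then Rltb else fun x y => Rltb y x.

Lemma lt_dir_irr up : irreflexive (lt_dir up).
Proof. by case: up => x /=; apply/negbTE/RltbP; lra. Qed.

Lemma lt_dir_trans up : transitive (lt_dir up).
Proof. by case: up => y x z /= /RltbP xy /RltbP yz; apply/RltbP; lra. Qed.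

Lemma lt_dir_total up x y : x != y -> lt_dir up x y || lt_dir up y x.
Proof.
move=> /eqP xy; have [lt_xy|lt_yx] : x < y \/ y < x by lra.
- by case: up; rewrite /= (introT (RltbP _ _) lt_xy) ?orbT.
- by case: up; rewrite /= (introT (RltbP _ _) lt_yx) ?orbT.
Qed.

Lemma lt_dir_addr up b x y : lt_dir up x y -> lt_dir up (x + b) (y + b).
Proof. by case: up => /= /RltbP xy; apply/RltbP; lra. Qed.

Lemma lt_dir_between up a x y : lt_dir up a x -> lt_dir up x y ->
  a < x < y \/ y < x < a.
Proof. by case: up => /= /RltbP ax /RltbP xy; lra. Qed.

Lemma nth_ord_inj (T : eqType) (x0 : T) (l : seq T) :
  uniq l -> injective (fun i : 'I_(size l) => nth x0 l i).
Proof.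
by move=> ul i j e; apply/val_inj/eqP; rewrite -(nth_uniq x0 (ltn_ord i) (ltn_ord j) ul) e.
Qed.

Section ConvexChain.
Variables (F : R -> R) (up : bool) (s B C D E : seq R).
Hypotheses (convF : strictly_convex F) (s_sorted : sorted (lt_dir up) s)
  (Fs_sorted : sorted Rleb (map F s)) (uB : uniq B) (uC : uniq C)
  (sB_D : forall x b, x \in s -> b \in B -> x + b \in D)
  (FsC_E : forall x c, x \in s -> c \in C -> F x + c \in E).

Lemma convex_steps_inj i j b b' c c' : (i.+1 < size s)%N -> (j.+1 < size s)%N ->
  nth R0 s i + b = nth R0 s j + b' -> nth R0 s i.+1 + b = nth R0 s j.+1 + b' ->
  F (nth R0 s i) + c = F (nth R0 s j) + c' ->
  F (nth R0 s i.+1) + c = F (nth R0 s j.+1) + c' ->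
  [/\ i = j, b = b' & c = c'].
Proof.
move=> ilt jlt ex0 ex1 ey0 ey1.
set h := nth R0 s i.+1 - nth R0 s i.
have h0 : h <> 0.
  have := (sortedP R0 s_sorted) i ilt.
  by rewrite /h => step /Rminus_diag_uniq e; move: step; rewrite e lt_dir_irr.
have s_ij : nth R0 s i = nth R0 s j.
  apply: (@strictly_convex_increment_inj F _ _ h convF h0).
  have -> : nth R0 s i + h = nth R0 s i.+1 by rewrite /h; lra.
  have -> : nth R0 s j + h = nth R0 s j.+1 by rewrite /h; lra.
  lra.
have ij : i = j.
  apply/eqP; rewrite -(nth_uniq R0 (ltnW ilt) (ltnW jlt)) ?s_ij //.
  exact: sorted_uniq (@lt_dir_trans up) (@lt_dir_irr up) _ s_sorted.
by split=> //; move: ex0 ey0; rewrite s_ij; lra.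
Qed.

Theorem convex_chain_bound :
  ((size s).-1 <= size D)%N -> ((size s).-1 <= size E)%N ->
  (size B * size C * (size s).-1 ^ 3 <= 200 * (size D * size E) ^ 2)%N.
Proof.
move=> KD KE; have [->|K0] := posnP (size s).-1; first by rewrite exp0n // muln0.
have size_s : size s = (size s).-1.+1 by case: (size s) K0.
have s_mem i : (i <= (size s).-1)%N -> nth R0 s i \in s.
  by move=> iK; apply: mem_nth; rewrite size_s.
pose X (p : 'I_(size B) * 'I_(size C)) i := rank (lt_dir up) D (nth R0 s i + nth R0 B p.1).
pose Y (p : 'I_(size B) * 'I_(size C)) i := rank Rltb E (F (nth R0 s i) + nth R0 C p.2).
have := @step_count_bound _ _ _ _ X Y _ _ _ _ _ K0 KD KE.
rewrite card_prod !card_ord; apply=> [p i _|p i _|p i iK|p i iK|p q i j].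
- exact: count_size.
- exact: count_size.
- by apply/rank_le/lt_dir_addr/(sortedP R0 s_sorted); [exact: lt_dir_trans | lia].
- rewrite /Y; have := (sortedP R0 Fs_sorted) i; rewrite size_map !(nth_map R0); try lia.
  move=> /(_ ltac:(lia)) /RlebP /Rle_lt_or_eq_dec [lt_Fs|->] //.
  by apply: rank_le; [exact: (@lt_dir_trans true) | apply/RltbP; lra].
have lt_size (k : 'I_(size s).-1) : (k.+1 < size s)%N by rewrite -ltn_predRL.
have x_inj := rank_inj (@lt_dir_irr up) (@lt_dir_trans up) (@lt_dir_total up) (D := D).
have y_inj := rank_inj (@lt_dir_irr true) (@lt_dir_trans true) (@lt_dir_total true) (D := E).
have x_mem k (b : 'I_(size B)) : (k <= (size s).-1)%N -> nth R0 s k + nth R0 B b \in D.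
  by move=> kK; apply: sB_D; rewrite ?s_mem ?mem_nth.
have y_mem k (c : 'I_(size C)) : (k <= (size s).-1)%N -> F (nth R0 s k) + nth R0 C c \in E.
  by move=> kK; apply: FsC_E; rewrite ?s_mem ?mem_nth.
move: p q => [pb pc] [qb qc] eX0 eX1 eY0 eY1.
have [ij eb ec] := convex_steps_inj (lt_size i) (lt_size j)
  (x_inj _ _ (x_mem _ _ (ltnW (ltn_ord i))) (x_mem _ _ (ltnW (ltn_ord j))) eX0)
  (x_inj _ _ (x_mem _ _ (ltn_ord i)) (x_mem _ _ (ltn_ord j)) eX1)
  (y_inj _ _ (y_mem _ _ (ltnW (ltn_ord i))) (y_mem _ _ (ltnW (ltn_ord j))) eY0)
  (y_inj _ _ (y_mem _ _ (ltn_ord i)) (y_mem _ _ (ltn_ord j)) eY1).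
by move: eb ec => /= /(nth_ord_inj uB) -> /(nth_ord_inj uC) ->; rewrite (val_inj ij).
Qed.

End ConvexChain.

Lemma exists_argmin (F : R -> R) (A : seq R) :
  A != [::] -> exists2 a, a \in A & forall x, x \in A -> F a <= F x.
Proof.
elim: A => [//|y A IH] _; have [->|/IH [a aA amin]] := eqVneq A [::].
  by exists y => [|x]; rewrite ?mem_seq1 // => /eqP ->; lra.
have [Fya|Fay] := Rle_lt_dec (F y) (F a).
- exists y => [|x]; rewrite !inE ?eqxx // => /predU1P[->|/amin]; lra.
- exists a => [|x]; rewrite !inE ?aA ?orbT // => /predU1P[->|/amin]; lra.
Qed.

Lemma convex_monotone_half F A : strictly_convex F -> uniq A -> A != [::] ->
  exists up s, [/\ {subset s <= A}, (size s <= size A < 2 * size s)%N, sorted (lt_dir up) s,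
    sorted Rleb (map F s) & uniq (map F (behead s))].
Proof.
move=> convF uA nA; have [a aA Fmin] := exists_argmin F nA.
(* s will be a followed by the points of A beyond a on the larger side. *)
pose tail up := sort [rel x y | (x == y) || lt_dir up x y] [seq x <- A | lt_dir up a x].
have tail_mem up x : (x \in tail up) = (x \in A) && lt_dir up a x.
  by rewrite mem_sort mem_filter andbC.
have tail_sorted up : sorted (lt_dir up) (tail up).
  rewrite /tail; apply: sorted_sort_strict (filter_uniq _ uA).
  - exact: lt_dir_trans.
  - exact: lt_dir_total.
have F_tail up : sorted Rltb (map F (tail up)).
  rewrite sorted_map; apply: sub_in_sorted (allss _) (tail_sorted up).
  move=> x y; rewrite !tail_mem => /andP[_ ax] /andP[yA _] xy /=; apply/RltbP.
  exact: strictly_convex_between convF (lt_dir_between ax xy) (Fmin y yA).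
have size_tails : (size (tail true) + size (tail false)).+1 = size A.
  rewrite !size_sort !size_filter -(count_predC (pred1 a)) count_uniq_mem // aA.
  rewrite add1n -count_predUI (@eq_count _ (predI _ _) pred0) ?count_pred0 /=; last first.
    by move=> x /=; case: (RltbP a x); case: (RltbP x a) => //= ? ?; exfalso; lra.
  rewrite addn0; congr _.+1; apply: eq_count => x /=; apply/idP/idP.
    by move=> /orP[] /RltbP ?; apply/eqP; lra.
  by rewrite eq_sym => /(@lt_dir_total true).
have [up large] : exists up, (size (tail (~~ up)) <= size (tail up))%N.
  case: (leqP (size (tail false)) (size (tail true))) => ?; first by exists true.
  by exists false; exact: ltnW.
exists up, (a :: tail up); split.
- by move=> x; rewrite inE tail_mem => /predU1P[->|/andP[]].
- by rewrite /= -size_tails; case: up large => /=; lia.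
- rewrite /= path_min_sorted ?tail_sorted //.
  by apply/allP => x; rewrite tail_mem => /andP[].
- rewrite /= path_min_sorted.
    by apply: (sub_sorted _ (F_tail up)) => x y /RltbP xy; apply/RlebP; lra.
  by apply/allP => y /mapP[x]; rewrite tail_mem => /andP[xA _] ->; apply/RlebP/Fmin.
- exact: sorted_uniq (@lt_dir_trans true) (@lt_dir_irr true) _ (F_tail up).
Qed.

Lemma InP (x : R) (l : seq R) : reflect (List.In x l) (x \in l).
Proof.
elim: l => [|y l IH] /=; first by right.
by rewrite inE; apply: (iffP predU1P) => -[->|/IH]; auto; move=> /IH; auto.
Qed.

Lemma NoDup_uniq (l : seq R) : NoDup l -> uniq l.
Proof. by elim: l => //= x l IH /NoDup_cons_iff[/InP x_l /IH ->]; rewrite andbT. Qed.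

Lemma length_size (T : Type) (l : list T) : length l = size l.
Proof. by elim: l => //= x l ->. Qed.

Lemma list_mapE (T U : Type) (f : T -> U) (l : list T) : List.map f l = map f l.
Proof. by elim: l => //= x l ->. Qed.

Lemma card_undup (l : seq R) : Defs.card l = size (undup l).
Proof.
rewrite /Defs.card; elim: l => //= x l IH.
by case: in_dec => [/InP -> // | /(introN (InP _ _))/negbTE ->]; rewrite /= IH.
Qed.

Lemma mem_sums u X Y :
  reflect (exists2 a, a \in X & exists2 b, b \in Y & u = a + b) (u \in sums X Y).
Proof.
apply: (iffP (InP _ _)); rewrite /sums in_flat_map.
  by move=> [a [/InP aX /in_map_iff[b [<- /InP bY]]]]; exists a => //; exists b.
by move=> [a /InP aX [b /InP bY ->]]; exists a; split => //; apply: in_map.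
Qed.

Lemma leq_size_sumsl X Y a : a \in X -> uniq Y -> (size Y <= size (undup (sums X Y)))%N.
Proof.
move=> aX uY; rewrite -(size_map (Rplus a)); apply: uniq_leq_size.
  by rewrite map_inj_uniq // => x y; apply: Rplus_eq_reg_l.
by move=> _ /mapP[b bY ->]; rewrite mem_undup; apply/mem_sums; exists a => //; exists b.
Qed.

Lemma leq_size_sumsr X Y b : b \in Y -> uniq X -> (size X <= size (undup (sums X Y)))%N.
Proof.
move=> bY uX; rewrite -(size_map (Rplus^~ b)); apply: uniq_leq_size.
  by rewrite map_inj_uniq // => x y; apply: Rplus_eq_reg_r.
by move=> _ /mapP[a aX ->]; rewrite mem_undup; apply/mem_sums; exists a => //; exists b.
Qed.

Lemma sumset_pair_power_bound F A B C k : strictly_convex F ->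
  uniq A -> uniq B -> uniq C -> size A = k -> size B = k -> size C = k -> (0 < k)%N ->
  (k ^ 5 <= (16 * maxn (size (undup (sums A B))) (size (undup (sums (map F A) C)))) ^ 4)%N.
Proof.
move=> convF uA uB uC sizeA sizeB sizeC k0.
have a0A : nth R0 A 0 \in A by apply: mem_nth; rewrite sizeA.
have kn : (k <= size (undup (sums A B)))%N by rewrite -sizeB; apply: leq_size_sumsl a0A uB.
have kN : (k <= size (undup (sums (map F A) C)))%N.
  by rewrite -sizeC; apply: leq_size_sumsl (map_f F a0A) uC.
have [k1|k2] := leqP k 1.
  have -> : k = 1%N by lia.
  by rewrite exp1n expn_gt0 muln_gt0 /= (leq_trans k0) // leq_max kn.
have nA : A != [::] by rewrite -size_eq0 sizeA -lt0n.
have [up [s [sA /andP[s_le large] s_sorted Fs_sorted _]]] := convex_monotone_half convF uA nA.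
have K_k : ((size s).-1 <= k)%N by rewrite -sizeA (leq_trans (leq_pred _) s_le).
apply: (@five_fourths_power_bound _ (size s).-1 (k * k)
  _ _ _ _ _ _ (leq_maxl _ _) (leq_maxr _ _)).
- lia.
- by rewrite leq_mul2r; lia.
rewrite -{1}sizeB -{1}sizeC.
apply: (convex_chain_bound convF s_sorted Fs_sorted uB uC).
- by move=> x b xs bB; rewrite mem_undup; apply/mem_sums; exists x; [exact: sA | exists b].
- by move=> x c xs cC; rewrite mem_undup; apply/mem_sums; exists (F x); [exact/map_f/sA | exists c].
- exact: leq_trans K_k kn.
- exact: leq_trans K_k kN.
Qed.

Lemma sumset_graph_power_bound F A k : strictly_convex F -> uniq A -> size A = k -> (0 < k)%N ->
  (k ^ 5 <= (16 * size (undup (sums A (map F A)))) ^ 4)%N.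
Proof.
move=> convF uA sizeA k0.
have a0A : nth R0 A 0 \in A by apply: mem_nth; rewrite sizeA.
have kn : (k <= size (undup (sums A (map F A))))%N.
  by rewrite -sizeA; apply: leq_size_sumsr (map_f F a0A) uA.
have [k1|k2] := leqP k 1.
  have -> : k = 1%N by lia.
  by rewrite exp1n expn_gt0 muln_gt0 /= (leq_trans k0).
have nA : A != [::] by rewrite -size_eq0 sizeA -lt0n.
have [up [s [sA /andP[s_le large] s_sorted Fs_sorted Fs_uniq]]] := convex_monotone_half convF uA nA.
have K_k : ((size s).-1 <= k)%N by rewrite -sizeA (leq_trans (leq_pred _) s_le).
have K_FA : ((size s).-1 <= size (undup (map F A)))%N.
  rewrite -size_behead -(size_map F); apply: uniq_leq_size Fs_uniq _.
  by move=> _ /mapP[x /mem_behead xs ->]; rewrite mem_undup map_f // sA.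
apply: (@five_fourths_power_bound _ (size s).-1 (size (undup (map F A)) * k)
  _ _ _ _ _ _ (leqnn _) (leqnn _)).
- lia.
- by rewrite leq_mul2r K_FA orbT.
rewrite -sizeA; apply: (convex_chain_bound convF s_sorted Fs_sorted (undup_uniq _) uA).
- move=> x b xs; rewrite !mem_undup => bFA; apply/mem_sums.
  by exists x; [exact: sA | exists b].
- move=> x c xs cA; rewrite mem_undup; apply/mem_sums.
  by exists c => //; exists (F x); [exact/map_f/sA | apply: Rplus_comm].
- exact: leq_trans K_k kn.
- exact: leq_trans K_k kn.
Qed.

Lemma Rpower_pow_inv (n : nat) x : (0 < n)%N -> 0 < x -> Rpower (x ^ n) (/ INR n) = x.
Proof.
move=> n0 x0; rewrite -Rpower_pow // Rpower_mult Rinv_r ?Rpower_1 //.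
by apply: not_0_INR; lia.
Qed.

Lemma INR_maxn m n : INR (maxn m n) = Rmax (INR m) (INR n).
Proof.
case: (leqP m n) => [mn|/ltnW nm].
- by rewrite Rmax_right //; apply/le_INR/leP.
- by rewrite Rmax_left //; apply/le_INR/leP.
Qed.

Lemma INR_expn m e : INR (m ^ e) = INR m ^ e.
Proof. by elim: e => [|e IH] //=; rewrite expnS mulnE mult_INR IH. Qed.

Lemma Rpower_five_fourths_le (k M : nat) : (0 < k)%N -> (k ^ 5 <= (16 * M) ^ 4)%N ->
  INR M >= 1 / 16 * Rpower (INR k) (5 / 4).
Proof.
move=> k0 /leP/le_INR; rewrite !INR_expn mulnE mult_INR (_ : INR 16 = 16); last by rewrite /=; lra.
move=> k5M4.
have k5_pos : 0 < INR k ^ 5 by apply/pow_lt/lt_0_INR/ltP.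
have M_pos : 0 < 16 * INR M.
  have [M0|M0] := Rle_lt_or_eq_dec _ _ (pos_INR M); first lra.
  by move: k5M4; rewrite -M0 /=; lra.
have inv4_pos : 0 <= / INR 4 by apply/Rlt_le/Rinv_0_lt_compat; rewrite /=; lra.
have := Rle_Rpower_l _ _ _ inv4_pos (conj k5_pos k5M4).
rewrite !Rpower_pow_inv // -Rpower_pow ?Rpower_mult; last exact/lt_0_INR/ltP.
have -> : INR 5 * / INR 4 = 5 / 4 by rewrite /=; field.
lra.
Qed.

Theorem theorem4 :
  exists c : R, 0 < c /\
    (forall (F : R -> R) (A B C : list R) (k : nat),
       strictly_convex F ->
       NoDup A -> NoDup B -> NoDup C ->
       length A = k -> length B = k -> length C = k ->
       (1 <= k)%coq_nat ->
       Rmax (INR (sumset_card A B)) (INR (sumset_card (List.map F A) C))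
         >= c * Rpower (INR k) (5 / 4)) /\
    (forall (F : R -> R) (A : list R) (k : nat),
       strictly_convex F ->
       NoDup A -> length A = k -> (1 <= k)%coq_nat ->
       INR (sumset_card A (List.map F A)) >= c * Rpower (INR k) (5 / 4)).
Proof.
exists (1 / 16); split; [lra | split].
- move=> F A B C k convF /NoDup_uniq uA /NoDup_uniq uB /NoDup_uniq uC.
  rewrite !length_size => sizeA sizeB sizeC /leP k0.
  rewrite /sumset_card !card_undup list_mapE -INR_maxn.
  exact/(Rpower_five_fourths_le k0)/sumset_pair_power_bound.
- move=> F A k convF /NoDup_uniq uA; rewrite length_size => sizeA /leP k0.
  rewrite /sumset_card card_undup list_mapE.
  exact/(Rpower_five_fourths_le k0)/sumset_graph_power_bound.
Qed.
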